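(* Let $X$ be a connected, locally connected topological space and let $f\colon X\to[0,1]$ be a continuous surjection. Then $f$ is a quotient map, i.e. a subset $G\subseteq[0,1]$ is open in $[0,1]$ if and only if $f^{-1}(G)$ is open in $X$.
   Context: $[0,1]$ carries its usual Euclidean topology. *)

From HB Require Import structures.
From mathcomp Require Import all_boot all_order all_algebra.
From mathcomp Require Import all_classical all_reals all_analysis.
Import numFieldNormedType.Exports.
Local Open Scope classical_set_scope.
Local Open Scope ring_scope.

Definition locally_connected (T : topologicalType) : Prop :=
  forall (x : T) (U : set T), open U -> U x ->
    exists V : set T, [/\ open V, connected V, V x & V `<=` U].

Definition open_in_subspace (T : topologicalType) (A G : set T) : Prop :=
  exists U : set T, open U /\ G = U `&` A.

From HB Require Import structures.
From mathcomp Require Import all_boot all_order all_algebra.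
From mathcomp Require Import all_classical all_reals all_analysis.
Import numFieldNormedType.Exports.
Import Order.TTheory GRing.Theory Num.Theory.
Local Open Scope classical_set_scope.
Local Open Scope ring_scope.

(* Given y = f x0 in G, suppose G contains no interval [y, t) with t > y.
   Then the sublevel set {f <= y} is open: near a point where f = y take a
   connected open V inside f^-1(G); its image is an interval of G through y,
   so it cannot reach above y. Being also closed and nonempty, the sublevel
   set is all of X, so f never exceeds y. Hence, when f takes values on both
   sides of y, G contains an interval around y; at an end point of the range
   a one-sided interval suffices for openness relative to the range. *)

Lemma open_in_subspace_nbhs (T : topologicalType) (A G : set T) :
  G `<=` A -> (forall y, G y -> exists U, [/\ open U, U y & U `&` A `<=` G]) ->
  open_in_subspace T A G.
Proof.
move=> GA nbhsG.
pose P := [set U : set T | open U /\ U `&` A `<=` G].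
exists (\bigcup_(U in P) U); split; first by apply: bigcup_open => U [].
apply/seteqP; split=> [y Gy|y [[U [_ UAG] Uy] Ay]]; last exact: UAG.
have [U [oU Uy UAG]] := nbhsG y Gy.
by split; [exists U | exact: GA].
Qed.

Section RightInterval.
Context {R : realType} {X : topologicalType} {f : X -> R} {G : set R}.
Hypotheses (cX : connected [set: X]) (lcX : locally_connected X).
Hypotheses (cf : continuous f) (oG : open (f @^-1` G)).

Lemma open_sublevel_no_right_interval (y : R) : G y ->
  ~ (exists2 t, y < t & forall z, y <= z < t -> G z) ->
  open (f @^-1` [set w | w <= y]).
Proof.
move=> Gy noG; rewrite openE => x /=; rewrite le_eqVlt => /predU1P[fxy|fxy].
  have [V [oV cV Vx VG]] : exists V, [/\ open V, connected V, V x & V `<=` f @^-1` G].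
    by apply: lcX oG _; rewrite /= fxy.
  apply: filterS (open_nbhs_nbhs (conj oV Vx)) => w Vw /=.
  rewrite leNgt; apply/negP => yw; apply: noG; exists (f w) => // z /andP[yz zw].
  have fV : is_interval (f @` V).
    apply/connected_intervalP/(connected_continuous_connected cV).
    exact: continuous_subspaceT.
  have [u Vu <-] : (f @` V) z.
    by apply: (fV y (f w)); [exists x | exists w | rewrite yz ltW].
  exact: VG.
have : nbhs x (f @^-1` [set w | w < y]).
  by apply: cf; apply: open_nbhs_nbhs; split; [exact: open_lt | exact: fxy].
by apply: filterS => w /ltW.
Qed.

Lemma right_interval_of_value (x0 x1 : X) : G (f x0) -> f x0 < f x1 ->
  exists2 t, f x0 < t & forall z, f x0 <= z < t -> G z.
Proof.
move=> Gfx0 fx01; apply: contrapT => noG.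
pose S := f @^-1` [set w | w <= f x0].
have ST : S = [set: X].
  apply: cX; first by exists x0; rewrite /S /= lexx.
  - by exists S; [exact: open_sublevel_no_right_interval | rewrite setTI].
  - exists S; last by rewrite setTI.
    by apply: preimage_closed => [x _|]; [exact: cf | exact: closed_le].
have : S x1 by rewrite ST.
by rewrite /S /= leNgt fx01.
Qed.

Lemma right_interval_of_value_le (b : R) (x0 x1 : X) :
  f x1 = b -> G (f x0) -> f x0 <= b ->
  exists2 t, f x0 < t & forall z, f x0 <= z < t -> z <= b -> G z.
Proof.
move=> fx1 Gfx0; rewrite le_eqVlt => /predU1P[fx0b|fx0b].
  exists (b + 1); first by rewrite fx0b ltrDl.
  move=> z /andP[fx0z _] zb.
  by have -> : z = f x0 by apply/eqP; rewrite eq_le fx0z fx0b zb.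
have [|t fx0t Gt] := right_interval_of_value x0 x1 Gfx0; first by rewrite fx1.
by exists t => // z /Gt.
Qed.

End RightInterval.

Lemma left_interval_of_value_ge {R : realType} {X : topologicalType}
    {f : X -> R} {G : set R} (cX : connected [set: X])
    (lcX : locally_connected X) (cf : continuous f) (oG : open (f @^-1` G))
    (a : R) (x0 x1 : X) :
  f x1 = a -> G (f x0) -> a <= f x0 ->
  exists2 s, s < f x0 & forall z, s < z <= f x0 -> a <= z -> G z.
Proof.
move=> fx1 Gfx0 afx0.
have cNf : continuous (fun x => - f x) by move=> x; exact: continuousN (cf x).
have oNG : open ((fun x => - f x) @^-1` [set z | G (- z)]).
  suff -> : (fun x => - f x) @^-1` [set z | G (- z)] = f @^-1` G by [].
  by apply/seteqP; split => x /=; rewrite opprK.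
have [|||t fx0t Gt] := right_interval_of_value_le cX lcX cNf oNG (- a) x0 x1.
- by rewrite fx1.
- by rewrite /= opprK.
- by rewrite lerN2.
exists (- t); first by rewrite ltrNl.
move=> z /andP[tz zfx0] az; rewrite -[z]opprK; apply: Gt.
  by rewrite lerN2 zfx0 ltrNl.
by rewrite lerN2.
Qed.

Theorem mainTheorem2 (R : realType) (X : topologicalType) (f : X -> R) :
  connected [set: X] -> locally_connected X ->
  continuous f -> range f = `[0, 1]%classic :> set R ->
  forall G : set R, G `<=` `[0, 1]%classic ->
    (@open_in_subspace R `[0, 1]%classic G <-> open (f @^-1` G)).
Proof.
move=> cX lcX cf rf G G01.
have f01 x : `[0, 1]%classic (f x) by rewrite -rf; exists x.
split=> [[U [oU ->]]|oG].
  suff -> : f @^-1` (U `&` `[0, 1]%classic) = f @^-1` U.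
    by apply: open_comp => // x _; exact: cf.
  by apply/seteqP; split => [x []|x Ufx] //; split=> //; exact: f01.
have [x0 _ fx0] : range f 0 by rewrite rf /= in_itv /= lexx ler01.
have [x1 _ fx1] : range f 1 by rewrite rf /= in_itv /= lexx ler01.
apply: (@open_in_subspace_nbhs R) => // y Gy.
have [x _ fxy] : range f y by rewrite rf; exact: G01.
rewrite -fxy in Gy *.
have := f01 x; rewrite /= in_itv /= => /andP[fx_ge0 fx_le1].
have [t fxt Gt] := right_interval_of_value_le cX lcX cf oG 1 x x1 fx1 Gy fx_le1.
have [s sfx Gs] := left_interval_of_value_ge cX lcX cf oG 0 x x0 fx0 Gy fx_ge0.
exists `]s, t[%classic; split; first exact: itv_open.
  by rewrite /= in_itv /= sfx fxt.
move=> z [] /=; rewrite !in_itv /= => /andP[sz zt] /andP[z0 z1].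
have [fxz|zfx] := leP (f x) z; first by apply: Gt => //; rewrite fxz.
by apply: Gs => //; rewrite sz ltW.
Qed.
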